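(* Let $\eta=\frac1{20}$ and for $a,b>0$ define $$U(a,b)=\eta\,\mathbb E_{x\sim\mathcal N(b,1)}\Big[\big(\tanh(ax)-\tfrac12\tanh''(ax)a^2+\tanh'(ax)ax\big)x\Big]-\eta\,\mathbb E_{x\sim\mathcal N(b,1)}[\tanh'(ax)a]-\eta a.$$ If $a\in[30,\tfrac43b]$, then $|U(a,b)|\le\frac{a+b}{10}$. *)

From Stdlib Require Import Reals.
From Coquelicot Require Import Coquelicot.
Open Scope R_scope.

Definition tanh (x : R) : R := (exp x - exp (- x)) / (exp x + exp (- x)).

Definition gauss_density (b x : R) : R :=
  / sqrt (2 * PI) * exp (- ((x - b) ^ 2) / 2).

Definition gauss_expect (b : R) (f : R -> R) : R :=
  RInt_gen (fun x => f x * gauss_density b x)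
           (Rbar_locally m_infty) (Rbar_locally p_infty).

Definition eta : R := 1 / 20.

Definition U (a b : R) : R :=
  eta * gauss_expect b (fun x =>
      (tanh (a * x) - / 2 * Derive_n tanh 2 (a * x) * a ^ 2
        + Derive tanh (a * x) * a * x) * x)
  - eta * gauss_expect b (fun x => Derive tanh (a * x) * a)
  - eta * a.

From Pilot Require Import Defs.
From Stdlib Require Import Reals Lra.
From Coquelicot Require Import Coquelicot.
Open Scope R_scope.

(* Reals exports its own [tanh]; re-importing Defs makes [tanh] denote [Defs.tanh]. *)
Import Defs.

(* Write U a b = eta E_1 - eta E_2 - eta a.  Both expectations are bounded by
   dominating the integrand with multiples of Cauchy kernels
   s / (1 + (s (x - x0))^2), each of total mass PI (antiderivative
   atan (s (x - x0))).  The Gaussian weight gives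
   |x| exp (-(x-b)^2/2) <= (4 + b) / (1 + (x-b)^2/2), and
   1 - tanh z ^ 2 <= 4 / (1 + |z|/2)^4 makes the terms carrying derivatives of
   tanh at a x decay like a / (1 + (a x)^2).  Hence
   |E_1| <= sqrt PI (4 + b) + sqrt (PI/2) (8 + 64/a^2) and |E_2| <= 4 sqrt (PI/2),
   and a >= 30 absorbs the constants. *)

Lemma ex_RInt_of_continuous (g : R -> R) (p q : R) :
  (forall x, continuous g x) -> ex_RInt g p q.
Proof.
  intros Hg. apply (ex_RInt_continuous (V := R_CompleteNormedModule)).
  intros x _. apply Hg.
Qed.

Lemma ball_R (x y e : R) : ball x e y <-> Rabs (y - x) < e.
Proof. reflexivity. Qed.

Lemma Rabs_sub_lt_of_close (p q l e : R) :
  Rabs (p - l) < e -> Rabs (q - l) < e -> Rabs (p - q) < 2 * e.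
Proof. rewrite !Rabs_lt_between. lra. Qed.

Section DominatedImproperIntegral.

Variables (f h H : R -> R) (Lm Lp : R).
Hypothesis f_cont : forall x, continuous f x.
Hypothesis h_cont : forall x, continuous h x.
Hypothesis H_deriv : forall x, is_derive H x (h x).
Hypothesis f_le_h : forall x, Rabs (f x) <= h x.
Hypothesis H_lim_m : filterlim H (Rbar_locally m_infty) (locally Lm).
Hypothesis H_lim_p : filterlim H (Rbar_locally p_infty) (locally Lp).

Lemma RInt_abs_le_increment_ordered (p q : R) :
  p <= q -> Rabs (RInt f p q) <= Rabs (H q - H p).
Proof.
  intros Hpq.
  assert (RInt_h : RInt h p q = H q - H p).
  { apply is_RInt_unique, (is_RInt_derive H h); intros; [apply H_deriv | apply h_cont]. }
  rewrite <- RInt_h.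
  eapply Rle_trans; [apply abs_RInt_le; auto; now apply ex_RInt_of_continuous |].
  eapply Rle_trans; [| apply Rle_abs].
  apply RInt_le; [exact Hpq | | now apply ex_RInt_of_continuous | intros; apply f_le_h].
  apply ex_RInt_of_continuous. intros x. apply continuous_comp; [apply f_cont | apply continuous_Rabs].
Qed.

Lemma RInt_abs_le_increment (p q : R) : Rabs (RInt f p q) <= Rabs (H q - H p).
Proof.
  destruct (Rle_or_lt p q) as [Hpq | Hqp]; [now apply RInt_abs_le_increment_ordered |].
  rewrite <- opp_RInt_swap by (now apply ex_RInt_of_continuous).
  change (Rabs (- RInt f q p) <= Rabs (H q - H p)).
  rewrite Rabs_Ropp, Rabs_minus_sym.
  apply RInt_abs_le_increment_ordered; lra.
Qed.

Lemma H_near_limits (eps : posreal) :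
  filter_prod (Rbar_locally m_infty) (Rbar_locally p_infty)
    (fun uv : R * R => Rabs (H (fst uv) - Lm) < eps /\ Rabs (H (snd uv) - Lp) < eps).
Proof.
  eapply Filter_prod.
  - exact (proj1 (filterlim_locally _ _) H_lim_m eps).
  - exact (proj1 (filterlim_locally _ _) H_lim_p eps).
  - intros u v Hu Hv. split; assumption.
Qed.

Lemma is_RInt_gen_antiderivative :
  is_RInt_gen h (Rbar_locally m_infty) (Rbar_locally p_infty) (Lp - Lm).
Proof.
  unshelve eapply (filterlimi_lim_ext (fun uv : R * R => H (snd uv) - H (fst uv))).
  { intros [p q]. apply (is_RInt_derive H h); intros; [apply H_deriv | apply h_cont]. }
  apply filterlim_locally. intros eps.
  assert (He : 0 < eps / 2) by (destruct eps; simpl; lra).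
  eapply filter_imp; [| exact (H_near_limits (mkposreal _ He))].
  intros [u v] [Hu Hv]. simpl in *. apply ball_R.
  apply Rabs_lt_between in Hu, Hv. apply Rabs_lt_between. lra.
Qed.

(* Cauchy criterion: the integrals over [u, u'] and [v, v'] near the two ends
   are controlled by the increments of H there. *)
Lemma ex_RInt_gen_dominated :
  ex_RInt_gen f (Rbar_locally m_infty) (Rbar_locally p_infty).
Proof.
  assert (PF : ProperFilter (filter_prod (Rbar_locally m_infty) (Rbar_locally p_infty))).
  { apply filter_prod_proper; apply Rbar_locally_filter. }
  destruct (proj1 (filterlim_locally_cauchy (fun uv => RInt f (fst uv) (snd uv))))
    as [l Hl].
  - intros eps.
    assert (He : 0 < eps / 4) by (destruct eps; simpl; lra).
    eexists. split; [exact (H_near_limits (mkposreal _ He)) |].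
    intros [u v] [u' v'] [Hu Hv] [Hu' Hv']. simpl in *. apply ball_R.
    rewrite <- (RInt_Chasles f u' u v'), <- (RInt_Chasles f u v v')
      by (now apply ex_RInt_of_continuous).
    replace (plus (RInt f u' u) (plus (RInt f u v) (RInt f v v')) - RInt f u v)
      with (RInt f u' u + RInt f v v') by (unfold plus; simpl; ring).
    pose proof (RInt_abs_le_increment u' u). pose proof (RInt_abs_le_increment v v').
    pose proof (Rabs_sub_lt_of_close _ _ _ _ Hu Hu').
    pose proof (Rabs_sub_lt_of_close _ _ _ _ Hv' Hv).
    eapply Rle_lt_trans; [apply Rabs_triang | simpl in *; lra].
  - exists l. unshelve eapply (filterlimi_lim_ext (fun uv => RInt f (fst uv) (snd uv))).
    + intros [p q]. apply (RInt_correct (V := R_CompleteNormedModule)).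
      now apply ex_RInt_of_continuous.
    + exact Hl.
Qed.

Lemma RInt_gen_abs_le_dominated :
  Rabs (RInt_gen f (Rbar_locally m_infty) (Rbar_locally p_infty)) <= Lp - Lm.
Proof.
  apply (RInt_gen_norm (Fa := Rbar_locally m_infty) (Fb := Rbar_locally p_infty) f h _ _).
  - apply Filter_prod with (Q := fun x => x < 0) (R := fun x => 0 < x).
    + now exists 0.
    + now exists 0.
    + simpl; intros; lra.
  - apply Filter_prod with (Q := fun _ => True) (R := fun _ => True);
      try now exists 0.
    intros; apply f_le_h.
  - apply RInt_gen_correct, ex_RInt_gen_dominated.
  - exact is_RInt_gen_antiderivative.
Qed.

End DominatedImproperIntegral.

Definition cauchy_kernel (s x0 x : R) : R := s / (1 + (s * (x - x0)) ^ 2).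

Lemma one_plus_sqr_pos (y : R) : 0 < 1 + y ^ 2.
Proof. pose proof (pow2_ge_0 y). lra. Qed.

Lemma is_derive_atan_affine (s x0 x : R) :
  is_derive (fun t => atan (s * (t - x0))) x (cauchy_kernel s x0 x).
Proof.
  unfold cauchy_kernel. auto_derive; [exact I |].
  pose proof (one_plus_sqr_pos (s * (x - x0))). field. simpl in *. lra.
Qed.

Lemma is_lim_atan_p_infty : is_lim atan p_infty (PI / 2).
Proof.
  apply is_lim_ext_loc with (fun x => PI / 2 - atan (/ x)).
  { exists 0; intros x Hx. rewrite atan_inv by lra. ring. }
  assert (Hinv : is_lim (fun x => atan (/ x)) p_infty 0).
  { rewrite <- atan_0. eapply is_lim_comp with (l := Finite 0).
    - apply is_lim_continuity, continuity_pt_filterlim, continuous_atan.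
    - apply (is_lim_inv (fun x => x) p_infty p_infty); [apply is_lim_id | discriminate].
    - exists 0; intros x Hx E. injection E. apply Rinv_neq_0_compat; lra. }
  replace (Finite (PI / 2)) with (Finite (PI / 2 - 0)) by (f_equal; ring).
  apply is_lim_minus'; [apply is_lim_const | exact Hinv].
Qed.

Lemma is_lim_atan_m_infty : is_lim atan m_infty (- (PI / 2)).
Proof.
  apply is_lim_ext with (fun x => - atan (- x)).
  { intros x. rewrite atan_opp. ring. }
  apply (is_lim_opp _ m_infty (PI / 2)).
  eapply is_lim_comp; [apply is_lim_atan_p_infty | | now exists 0].
  apply (is_lim_opp (fun x => x) m_infty m_infty), is_lim_id.
Qed.

Lemma is_lim_atan_affine_p_infty (s x0 : R) :
  0 < s -> is_lim (fun x => atan (s * (x - x0))) p_infty (PI / 2).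
Proof.
  intros Hs. eapply is_lim_comp; [apply is_lim_atan_p_infty | | now exists 0].
  intros P [M HM]. exists (x0 + Rabs M / s). intros x Hx. apply HM.
  assert (Rabs M / s * s = Rabs M) by (field; lra).
  pose proof (RRle_abs M). nra.
Qed.

Lemma is_lim_atan_affine_m_infty (s x0 : R) :
  0 < s -> is_lim (fun x => atan (s * (x - x0))) m_infty (- (PI / 2)).
Proof.
  intros Hs. eapply is_lim_comp; [apply is_lim_atan_m_infty | | now exists 0].
  intros P [M HM]. exists (x0 - Rabs M / s). intros x Hx. apply HM.
  assert (Rabs M / s * s = Rabs M) by (field; lra).
  pose proof (Rle_abs (- M)). rewrite Rabs_Ropp in *. nra.
Qed.

Lemma RInt_gen_abs_le_cauchy_kernels (f : R -> R) (k1 s1 x1 k2 s2 x2 : R) :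
  0 < s1 -> 0 < s2 -> (forall x, continuous f x) ->
  (forall x, Rabs (f x) <= k1 * cauchy_kernel s1 x1 x + k2 * cauchy_kernel s2 x2 x) ->
  Rabs (RInt_gen f (Rbar_locally m_infty) (Rbar_locally p_infty)) <= PI * (k1 + k2).
Proof.
  intros Hs1 Hs2 Hf Hle.
  set (atan_sum x := k1 * atan (s1 * (x - x1)) + k2 * atan (s2 * (x - x2))).
  replace (PI * (k1 + k2))
    with (k1 * (PI / 2) + k2 * (PI / 2) - (k1 * - (PI / 2) + k2 * - (PI / 2))) by field.
  apply (RInt_gen_abs_le_dominated f
           (fun x => k1 * cauchy_kernel s1 x1 x + k2 * cauchy_kernel s2 x2 x) atan_sum);
    auto.
  - intros x. apply (ex_derive_continuous (K := R_AbsRing) (V := R_NormedModule)).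
    unfold cauchy_kernel. auto_derive.
    pose proof (one_plus_sqr_pos (s1 * (x - x1))).
    pose proof (one_plus_sqr_pos (s2 * (x - x2))). simpl in *. repeat split; lra.
  - intros x. apply (is_derive_plus (fun x => k1 * _) (fun x => k2 * _));
      apply is_derive_scal, is_derive_atan_affine.
  - apply (is_lim_plus' (fun x => k1 * atan (s1 * (x - x1)))
             (fun x => k2 * atan (s2 * (x - x2))) m_infty);
      apply (is_lim_scal_l _ _ m_infty (- (PI / 2))); now apply is_lim_atan_affine_m_infty.
  - apply (is_lim_plus' (fun x => k1 * atan (s1 * (x - x1)))
             (fun x => k2 * atan (s2 * (x - x2))) p_infty);
      apply (is_lim_scal_l _ _ p_infty (PI / 2)); now apply is_lim_atan_affine_p_infty.
Qed.

Lemma RInt_gen_abs_le_cauchy_kernel (f : R -> R) (k s x0 : R) :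
  0 < s -> (forall x, continuous f x) ->
  (forall x, Rabs (f x) <= k * cauchy_kernel s x0 x) ->
  Rabs (RInt_gen f (Rbar_locally m_infty) (Rbar_locally p_infty)) <= PI * k.
Proof.
  intros Hs Hf Hle. rewrite <- (Rplus_0_l k).
  apply (RInt_gen_abs_le_cauchy_kernels f 0 1 0 k s x0); auto; [lra |].
  intros x. rewrite Rmult_0_l, Rplus_0_l. apply Hle.
Qed.

Lemma is_derive_tanh (y : R) : is_derive tanh y (1 - tanh y ^ 2).
Proof.
  unfold tanh. pose proof (exp_pos y). pose proof (exp_pos (- y)).
  auto_derive; unfold cosh, sinh; [lra |]. field. lra.
Qed.

Lemma ex_derive_tanh (y : R) : ex_derive tanh y.
Proof. exists (1 - tanh y ^ 2). apply is_derive_tanh. Qed.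

Lemma Derive_tanh (y : R) : Derive tanh y = 1 - tanh y ^ 2.
Proof. apply is_derive_unique, is_derive_tanh. Qed.

Lemma Derive_n_tanh_2 (y : R) :
  Derive_n tanh 2 y = - 2 * tanh y * (1 - tanh y ^ 2).
Proof.
  simpl. rewrite (Derive_ext _ (fun x => 1 - tanh x ^ 2)) by (intros; apply Derive_tanh).
  apply is_derive_unique. auto_derive; [apply ex_derive_tanh |].
  rewrite Derive_tanh. ring.
Qed.

Lemma sech2_eq (z : R) : 1 - tanh z ^ 2 = 4 / (exp z + exp (- z)) ^ 2.
Proof.
  unfold tanh. rewrite exp_Ropp. pose proof (exp_pos z).
  field. nra.
Qed.

Lemma Rabs_tanh_le_1 (z : R) : Rabs (tanh z) <= 1.
Proof.
  unfold tanh. pose proof (exp_pos z). pose proof (exp_pos (- z)).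
  unfold Rdiv. rewrite Rabs_mult, Rabs_inv, (Rabs_right (exp z + exp (- z))) by lra.
  apply (Rmult_le_reg_r (exp z + exp (- z))); [lra |].
  rewrite Rmult_assoc, Rinv_l, Rmult_1_r, Rmult_1_l by lra.
  apply Rabs_le. lra.
Qed.

Lemma exp_ge_sqr (u : R) : 0 <= u -> (1 + u / 2) ^ 2 <= exp u.
Proof.
  intros Hu. replace u with (u / 2 + u / 2) at 2 by field. rewrite exp_plus.
  pose proof (exp_ineq1_le (u / 2)). nra.
Qed.

Lemma cosh_ge (z : R) : (1 + Rabs z / 2) ^ 2 <= exp z + exp (- z).
Proof.
  pose proof (exp_pos z). pose proof (exp_pos (- z)).
  destruct (Rle_or_lt 0 z) as [Hz | Hz].
  - rewrite Rabs_right by lra. pose proof (exp_ge_sqr z Hz). lra.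
  - rewrite Rabs_left by lra. pose proof (exp_ge_sqr (- z) ltac:(lra)). lra.
Qed.

Lemma sech2_decay (z : R) : (1 - tanh z ^ 2) * (1 + Rabs z / 2) ^ 4 <= 4.
Proof.
  rewrite sech2_eq. pose proof (cosh_ge z) as Hc. pose proof (Rabs_pos z).
  set (C := exp z + exp (- z)) in *. set (q := 1 + Rabs z / 2) in *.
  assert (Hq : 1 <= q ^ 2) by (unfold q; nra).
  replace (4 / C ^ 2 * q ^ 4) with (4 * (q ^ 2) ^ 2 / C ^ 2) by (field; lra).
  apply Rle_div_l; [apply pow_lt; lra |].
  assert ((q ^ 2) ^ 2 <= C ^ 2) by (apply pow_incr; lra).
  lra.
Qed.

Lemma sech2_weighted_bounds (z : R) :
  let d := 1 - tanh z ^ 2 in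
  0 <= d /\ d * (1 + z ^ 2) <= 4 /\
  Rabs z * d * (1 + z ^ 2) <= 8 /\ z ^ 2 * d * (1 + z ^ 2) <= 64.
Proof.
  intros d. pose proof (sech2_decay z) as Hdec. fold d in Hdec.
  assert (Hd : 0 <= d).
  { unfold d. rewrite sech2_eq. apply Rlt_le, Rdiv_lt_0_compat; [lra |].
    apply pow_lt. pose proof (exp_pos z). pose proof (exp_pos (- z)). lra. }
  rewrite <- (pow2_abs z). set (w := Rabs z) in *.
  assert (Hw : 0 <= w) by apply Rabs_pos.
  assert (1 + w ^ 2 <= (1 + w / 2) ^ 4) by nra.
  assert (w * (1 + w ^ 2) <= 2 * (1 + w / 2) ^ 4) by nra.
  assert (w ^ 2 * (1 + w ^ 2) <= 16 * (1 + w / 2) ^ 4) by nra.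
  repeat split; nra.
Qed.

Lemma gauss_weighted_bounds (y : R) :
  let E := exp (- (y ^ 2) / 2) in
  0 < E /\ E * (1 + y ^ 2 / 2) <= 1 /\ Rabs y * E * (1 + y ^ 2 / 2) <= 4.
Proof.
  intros E. unfold E. rewrite <- (pow2_abs y). set (w := Rabs y). set (u := w ^ 2 / 2).
  assert (Hw : 0 <= w) by apply Rabs_pos.
  assert (Hu : 0 <= u) by (unfold u; pose proof (pow2_ge_0 w); lra).
  assert (HEu : exp (- (w ^ 2) / 2) * exp u = 1).
  { unfold u. rewrite <- exp_plus. replace (- (w ^ 2) / 2 + w ^ 2 / 2) with 0 by field.
    apply exp_0. }
  pose proof (exp_ge_sqr u Hu). pose proof (exp_pos u).
  pose proof (exp_pos (- (w ^ 2) / 2)).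
  assert (w * (1 + u) <= 4 * (1 + u / 2) ^ 2) by (unfold u; nra).
  fold u. repeat split; nra.
Qed.

Lemma abs_mul_gauss_le_kernel (b x : R) : 0 <= b ->
  Rabs x * exp (- ((x - b) ^ 2) / 2) <= (4 + b) * sqrt 2 * cauchy_kernel (/ sqrt 2) b x.
Proof.
  intros Hb.
  assert (Hr : 0 < sqrt 2) by (apply sqrt_lt_R0; lra).
  assert (Hkernel : (4 + b) * sqrt 2 * cauchy_kernel (/ sqrt 2) b x
                    = (4 + b) / (1 + (x - b) ^ 2 / 2)).
  { unfold cauchy_kernel. rewrite Rpow_mult_distr, pow_inv, <- Rsqr_pow2, Rsqr_sqrt by lra.
    field. pose proof (pow2_ge_0 (x - b)). lra. }
  rewrite Hkernel. set (y := x - b).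
  destruct (gauss_weighted_bounds y) as [HE [HE1 HEy]].
  set (E := exp (- (y ^ 2) / 2)) in *.
  assert (Hx : Rabs x <= Rabs y + b).
  { replace x with (y + b) by (unfold y; ring).
    eapply Rle_trans; [apply Rabs_triang |]. rewrite (Rabs_right b) by lra. lra. }
  apply (Rle_div_r _ _ (1 + y ^ 2 / 2)); [pose proof (pow2_ge_0 y); lra |].
  assert (0 <= E * (1 + y ^ 2 / 2)) by (apply Rmult_le_pos; pose proof (pow2_ge_0 y); lra).
  nra.
Qed.

Lemma sech2_terms_le_kernel (a x : R) : 0 < a ->
  (1 - tanh (a * x) ^ 2) * a ^ 2 * Rabs x + (1 - tanh (a * x) ^ 2) * a * x ^ 2
  <= (8 + 64 / a ^ 2) * cauchy_kernel a 0 x.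
Proof.
  intros Ha.
  destruct (sech2_weighted_bounds (a * x)) as [Hd [_ [Hz Hz2]]].
  set (d := 1 - tanh (a * x) ^ 2) in *.
  set (z := a * x) in *.
  assert (Hkernel : (8 + 64 / a ^ 2) * cauchy_kernel a 0 x = (8 * a + 64 / a) / (1 + z ^ 2)).
  { unfold cauchy_kernel, z. rewrite Rminus_0_r. field.
    split; [lra | apply Rgt_not_eq, one_plus_sqr_pos]. }
  assert (Hlhs : d * a ^ 2 * Rabs x + d * a * x ^ 2 = a * (Rabs z * d) + z ^ 2 * d / a).
  { unfold z. rewrite Rabs_mult, (Rabs_right a) by lra. field. lra. }
  rewrite Hkernel, Hlhs. apply (Rle_div_r _ _ (1 + z ^ 2)); [apply one_plus_sqr_pos |].
  assert (z ^ 2 * d * (1 + z ^ 2) / a <= 64 / a)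
    by (apply Rmult_le_compat_r; [apply Rlt_le, Rinv_0_lt_compat |]; lra).
  replace ((a * (Rabs z * d) + z ^ 2 * d / a) * (1 + z ^ 2))
    with (a * (Rabs z * d * (1 + z ^ 2)) + z ^ 2 * d * (1 + z ^ 2) / a) by (field; lra).
  nra.
Qed.

Lemma sech2_le_kernel (a x : R) : 0 < a ->
  (1 - tanh (a * x) ^ 2) * a <= 4 * cauchy_kernel a 0 x.
Proof.
  intros Ha. destruct (sech2_weighted_bounds (a * x)) as [Hd [H4 _]].
  unfold cauchy_kernel. rewrite Rminus_0_r.
  replace (4 * (a / (1 + (a * x) ^ 2))) with (4 * a / (1 + (a * x) ^ 2)) by (unfold Rdiv; ring).
  apply (Rle_div_r _ _ (1 + (a * x) ^ 2)); [apply one_plus_sqr_pos |]. nra.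
Qed.

Lemma abs_first_integrand_le (T d a x : R) : Rabs T <= 1 -> 0 <= d -> 0 < a ->
  Rabs ((T + T * d * a ^ 2 + d * a * x) * x) <= Rabs x + d * a ^ 2 * Rabs x + d * a * x ^ 2.
Proof.
  intros HT Hd Ha.
  replace ((T + T * d * a ^ 2 + d * a * x) * x) with (T * (1 + d * a ^ 2) * x + d * a * x ^ 2)
    by ring.
  assert (Hda : 0 <= d * a ^ 2) by (apply Rmult_le_pos; [lra | apply pow2_ge_0]).
  assert (Hdax : 0 <= d * a * x ^ 2)
    by (apply Rmult_le_pos; [apply Rmult_le_pos; lra | apply pow2_ge_0]).
  eapply Rle_trans; [apply Rabs_triang |].
  rewrite (Rabs_right (d * a * x ^ 2)), !Rabs_mult, (Rabs_right (1 + d * a ^ 2)) by lra.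
  assert (Rabs T * ((1 + d * a ^ 2) * Rabs x) <= 1 * ((1 + d * a ^ 2) * Rabs x))
    by (apply Rmult_le_compat_r; [apply Rmult_le_pos; [| apply Rabs_pos] |]; lra).
  lra.
Qed.

Lemma gauss_const_pos : 0 < / sqrt (2 * PI).
Proof. apply Rinv_0_lt_compat, sqrt_lt_R0. pose proof PI_RGT_0. lra. Qed.

Lemma first_integrand_weight_le (a b x : R) : 0 < a -> 0 <= b ->
  Rabs ((tanh (a * x) + tanh (a * x) * (1 - tanh (a * x) ^ 2) * a ^ 2
         + (1 - tanh (a * x) ^ 2) * a * x) * x) * exp (- ((x - b) ^ 2) / 2)
  <= (4 + b) * sqrt 2 * cauchy_kernel (/ sqrt 2) b x + (8 + 64 / a ^ 2) * cauchy_kernel a 0 x.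
Proof.
  intros Ha Hb.
  pose proof (abs_mul_gauss_le_kernel b x Hb) as Hgauss.
  pose proof (sech2_terms_le_kernel a x Ha) as Hsech.
  destruct (sech2_weighted_bounds (a * x)) as [Hd _].
  destruct (gauss_weighted_bounds (x - b)) as [HE [HE1 _]].
  pose proof (abs_first_integrand_le _ _ a x (Rabs_tanh_le_1 (a * x)) Hd Ha) as Hpoly.
  set (d := 1 - tanh (a * x) ^ 2) in *.
  set (E := exp (- ((x - b) ^ 2) / 2)) in *.
  set (S := d * a ^ 2 * Rabs x + d * a * x ^ 2) in *.
  assert (HE_le_1 : E <= 1) by (pose proof (pow2_ge_0 (x - b)); nra).
  assert (HS : 0 <= S).
  { pose proof (Rabs_pos x). pose proof (pow2_ge_0 x). pose proof (pow2_ge_0 a).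
    apply Rplus_le_le_0_compat; (apply Rmult_le_pos; [apply Rmult_le_pos |]); lra. }
  assert (S * E <= S * 1) by (apply Rmult_le_compat_l; lra).
  eapply Rle_trans; [apply Rmult_le_compat_r; [lra | exact Hpoly] |].
  unfold S in *. lra.
Qed.

Lemma first_integrand_le (a b x : R) : 0 < a -> 0 <= b ->
  Rabs ((tanh (a * x) - / 2 * Derive_n tanh 2 (a * x) * a ^ 2
           + Derive tanh (a * x) * a * x) * x * gauss_density b x)
  <= / sqrt (2 * PI) * (4 + b) * sqrt 2 * cauchy_kernel (/ sqrt 2) b x
     + / sqrt (2 * PI) * (8 + 64 / a ^ 2) * cauchy_kernel a 0 x.
Proof.
  intros Ha Hb.
  rewrite Derive_tanh, Derive_n_tanh_2. unfold gauss_density.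
  pose proof (first_integrand_weight_le a b x Ha Hb) as Hweight.
  set (T := tanh (a * x)) in *. set (E := exp (- ((x - b) ^ 2) / 2)) in *.
  set (c := / sqrt (2 * PI)).
  replace ((T - / 2 * (- 2 * T * (1 - T ^ 2)) * a ^ 2 + (1 - T ^ 2) * a * x) * x * (c * E))
    with (c * (((T + T * (1 - T ^ 2) * a ^ 2 + (1 - T ^ 2) * a * x) * x) * E)) by field.
  rewrite Rabs_mult, (Rabs_right c) by (apply Rle_ge, Rlt_le, gauss_const_pos).
  rewrite Rabs_mult, (Rabs_right E) by (apply Rle_ge, Rlt_le, exp_pos).
  rewrite !(Rmult_assoc c), <- Rmult_plus_distr_l.
  apply Rmult_le_compat_l; [apply Rlt_le, gauss_const_pos | exact Hweight].
Qed.

Lemma second_integrand_le (a b x : R) : 0 < a ->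
  Rabs (Derive tanh (a * x) * a * gauss_density b x)
  <= / sqrt (2 * PI) * 4 * cauchy_kernel a 0 x.
Proof.
  intros Ha.
  rewrite Derive_tanh. unfold gauss_density.
  pose proof (sech2_le_kernel a x Ha) as Hsech.
  destruct (sech2_weighted_bounds (a * x)) as [Hd _].
  destruct (gauss_weighted_bounds (x - b)) as [HE [HE1 _]].
  set (E := exp (- ((x - b) ^ 2) / 2)) in *. set (c := / sqrt (2 * PI)).
  set (d := 1 - tanh (a * x) ^ 2) in *.
  assert (HE_le_1 : E <= 1) by (pose proof (pow2_ge_0 (x - b)); nra).
  pose proof gauss_const_pos as Hc. fold c in Hc.
  rewrite Rabs_right by (apply Rle_ge; repeat apply Rmult_le_pos; lra).
  assert (d * a * E <= d * a * 1) by (apply Rmult_le_compat_l; [apply Rmult_le_pos |]; lra).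
  replace (d * a * (c * E)) with (c * (d * a * E)) by ring.
  rewrite (Rmult_assoc c). apply Rmult_le_compat_l; lra.
Qed.

Lemma continuous_of_ex_derive_ext (g h : R -> R) (x : R) :
  (forall t, h t = g t) -> ex_derive g x -> continuous h x.
Proof.
  intros Heq Hg. apply (continuous_ext g); [intros; symmetry; apply Heq |].
  now apply (ex_derive_continuous (K := R_AbsRing) (V := R_NormedModule)).
Qed.

Lemma gauss_expect_first_le (a b : R) : 0 < a -> 0 < b ->
  Rabs (gauss_expect b (fun x =>
      (tanh (a * x) - / 2 * Derive_n tanh 2 (a * x) * a ^ 2
        + Derive tanh (a * x) * a * x) * x))
  <= PI * / sqrt (2 * PI) * ((4 + b) * sqrt 2 + (8 + 64 / a ^ 2)).
Proof.
  intros Ha Hb.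
  eapply Rle_trans.
  - apply (RInt_gen_abs_le_cauchy_kernels _
             (/ sqrt (2 * PI) * (4 + b) * sqrt 2) (/ sqrt 2) b
             (/ sqrt (2 * PI) * (8 + 64 / a ^ 2)) a 0).
    + apply Rinv_0_lt_compat, sqrt_lt_R0; lra.
    + exact Ha.
    + intros x. eapply continuous_of_ex_derive_ext.
      { intros t. rewrite Derive_tanh, Derive_n_tanh_2. unfold gauss_density. reflexivity. }
      auto_derive. repeat split; apply ex_derive_tanh.
    + intros x. apply first_integrand_le; lra.
  - right. ring.
Qed.

Lemma gauss_expect_second_le (a b : R) : 0 < a ->
  Rabs (gauss_expect b (fun x => Derive tanh (a * x) * a))
  <= PI * / sqrt (2 * PI) * 4.
Proof.
  intros Ha.
  eapply Rle_trans.
  - apply (RInt_gen_abs_le_cauchy_kernel _ (/ sqrt (2 * PI) * 4) a 0).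
    + exact Ha.
    + intros x. eapply continuous_of_ex_derive_ext.
      { intros t. rewrite Derive_tanh. unfold gauss_density. reflexivity. }
      auto_derive. repeat split; apply ex_derive_tanh.
    + intros x. apply second_integrand_le, Ha.
  - right. ring.
Qed.

Lemma gauss_const_PI_bounds :
  PI * / sqrt (2 * PI) * sqrt 2 <= 2 /\ PI * / sqrt (2 * PI) <= 3 / 2.
Proof.
  pose proof PI_RGT_0. pose proof PI_4.
  assert (Hr : 0 < sqrt 2) by (apply sqrt_lt_R0; lra).
  assert (Hp : 0 < sqrt PI) by (apply sqrt_lt_R0; lra).
  assert (Hc : PI * / sqrt (2 * PI) = sqrt PI / sqrt 2).
  { rewrite sqrt_mult by lra. rewrite <- (sqrt_sqrt PI) at 1 by lra. field. lra. }
  rewrite Hc. split.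
  - replace (sqrt PI / sqrt 2 * sqrt 2) with (sqrt PI) by (field; lra).
    rewrite <- (sqrt_square 2) by lra. apply sqrt_le_1_alt. lra.
  - assert (Hsq : (sqrt PI / sqrt 2) ^ 2 = PI / 2).
    { unfold Rdiv. rewrite Rpow_mult_distr, pow_inv, <- !Rsqr_pow2, !Rsqr_sqrt by lra.
      reflexivity. }
    assert (0 <= sqrt PI / sqrt 2) by (apply Rlt_le, Rdiv_lt_0_compat; lra).
    nra.
Qed.

Theorem lemmaF4 (a b : R) (ha : 0 < a) (hb : 0 < b)
  (h1 : 30 <= a) (h2 : a <= 4 / 3 * b) :
  Rabs (U a b) <= (a + b) / 10.
Proof.
  pose proof (gauss_expect_first_le a b ha hb) as B1.
  pose proof (gauss_expect_second_le a b ha) as B2.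
  destruct gauss_const_PI_bounds as [K1 K2].
  unfold U, eta.
  set (I1 := gauss_expect b _) in B1 |- *.
  set (I2 := gauss_expect b _) in B2 |- *.
  set (k := PI * / sqrt (2 * PI)) in *.
  assert (Ha2 : 64 / a ^ 2 <= 1 / 10) by (apply Rle_div_l; nra).
  assert (HI1 : Rabs I1 <= 2 * (4 + b) + 3 / 2 * (8 + 1 / 10)).
  { eapply Rle_trans; [exact B1 |].
    assert (0 <= 64 / a ^ 2) by (apply Rlt_le, Rdiv_lt_0_compat; nra).
    pose proof (sqrt_pos 2). nra. }
  assert (HI2 : Rabs I2 <= 6) by lra.
  apply Rabs_le_between in HI1. apply Rabs_le_between in HI2.
  apply Rabs_le_between. lra.
Qed.
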